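(* Let $(H,\alpha)$ be a monoidal Hom-bialgebra, let $(A,\beta)$ be a left $(H,\alpha)$-Hom-comodule coalgebra with coaction $a\mapsto a_{(-1)}\otimes a_{(0)}$, and let $m\in\mathbb{Z}$. On $A\rtimes H:=A\otimes H$ define $$\varepsilon_{A\rtimes H}(a\rtimes h)=\varepsilon(a)\varepsilon(h),\qquad \Delta_{A\rtimes H}(a\rtimes h)=a_{1}\rtimes\alpha^{m}(a_{2(-1)})\alpha^{-1}(h_{1})\otimes\beta(a_{2(0)})\rtimes h_{2}.$$ Then $(A\rtimes H,\beta\otimes\alpha)$ with $\Delta_{A\rtimes H}$ and $\varepsilon_{A\rtimes H}$ is a monoidal Hom-coalgebra.
   Context: All vector spaces are over a field $k$; Sweedler notation $\Delta(c)=c_1\otimes c_2$. A monoidal Hom-algebra $(A,\beta)$: multiplication, unit $1_A$, linear automorphism $\beta$ with $\beta(a)(bc)=(ab)\beta(c)$, $\beta(ab)=\beta(a)\beta(b)$, $a1_A=1_Aa=\beta(a)$, $\beta(1_A)=1_A$. A monoidal Hom-coalgebra $(C,\gamma)$: $\Delta$, $\varepsilon$, linear automorphism $\gamma$ with $\gamma^{-1}(c_1)\otimes\Delta(c_2)=\Delta(c_1)\otimes\gamma^{-1}(c_2)$, $\Delta(\gamma(c))=\gamma(c_1)\otimes\gamma(c_2)$, $c_1\varepsilon(c_2)=\gamma^{-1}(c)=\varepsilon(c_1)c_2$, $\varepsilon\circ\gamma=\varepsilon$. A monoidal Hom-bialgebra $(H,\alpha)$ is both (with the same $\alpha$) with $\Delta,\varepsilon$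 multiplicative and unital. A left $(H,\alpha)$-Hom-comodule is $(M,\mu)$, $\mu$ a linear automorphism, with $\rho(x)=x_{(-1)}\otimes x_{(0)}$ satisfying $\Delta_H(x_{(-1)})\otimes\mu^{-1}(x_{(0)})=\alpha^{-1}(x_{(-1)})\otimes x_{(0)(-1)}\otimes x_{(0)(0)}$, $\rho(\mu(x))=\alpha(x_{(-1)})\otimes\mu(x_{(0)})$, $\varepsilon_H(x_{(-1)})x_{(0)}=\mu^{-1}(x)$. A left $(H,\alpha)$-Hom-comodule coalgebra is a monoidal Hom-coalgebra $(A,\beta)$ which is a left $(H,\alpha)$-Hom-comodule such that $b_{(-1)}\otimes b_{(0)1}\otimes b_{(0)2}=b_{1(-1)}b_{2(-1)}\otimes b_{1(0)}\otimes b_{2(0)}$ and $\varepsilon(b_{(0)})b_{(-1)}=\varepsilon(b)1_H$. *)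

From HB Require Import structures.
From mathcomp Require Import all_boot all_algebra.
From mathcomp Require Import boolp classical_sets functions.

Set Implicit Arguments.
Unset Strict Implicit.
Unset Printing Implicit Defensive.

Import GRing.Theory.
Local Open Scope ring_scope.

(* A (x) B is realised as the subspace of the space of K-valued functions   *)
(* on {scalar A} * {scalar B} (pairs of linear functionals) spanned by the  *)
(* pure tensors  a (x) b := (f, g) |-> f a * g b.  Over a field this map    *)
(* from the algebraic tensor product is injective, so this IS A (x) B.      *)
Section Tensor.
Context {K : fieldType} (A B : lmodType K).

Definition dual2 := {scalar A} -> {scalar B} -> K^o.

Definition tens_of (s : seq (A * B)) : dual2 :=
  fun f g => \sum_(p <- s) f p.1 * g p.2.

Definition is_tensor : {pred dual2} := fun t => `[< exists s, t = tens_of s >].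

Lemma is_tensor_closed : subsemimod_closed is_tensor.
Proof.
split; [split|].
- rewrite unfold_in /=; apply/asboolP; exists [::].
  by apply: funext => f; apply: funext => g; rewrite /tens_of big_nil.
- move=> u v; rewrite !unfold_in /= => /asboolP [s ->] /asboolP [t ->].
  apply/asboolP; exists (s ++ t).
  by apply: funext => f; apply: funext => g; rewrite /tens_of big_cat.
- move=> a u; rewrite !unfold_in /= => /asboolP [s ->]; apply/asboolP.
  exists [seq (a *: p.1, p.2) | p <- s].
  apply: funext => f; apply: funext => g; rewrite /tens_of big_map /=.
  rewrite [LHS]/(_ *: _) /= [LHS]/(_ *: _) /= /GRing.scale /= mulr_sumr.
  by apply: eq_bigr => p _; rewrite linearZ /= mulrA.
Qed.

HB.instance Definition _ :=
  GRing.isSubmodClosed.Build K dual2 is_tensor is_tensor_closed.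

Record tensor := Tensor { tensor_val :> dual2; _ : tensor_val \in is_tensor }.

HB.instance Definition _ := [isSub for tensor_val].
HB.instance Definition _ := [Choice of tensor by <:].
HB.instance Definition _ := [SubChoice_isSubLmodule of tensor by <:].

Lemma tmul_subproof (a : A) (b : B) : tens_of [:: (a, b)] \in is_tensor.
Proof. by apply/asboolP; exists [:: (a, b)]. Qed.

Definition tmul (a : A) (b : B) : tensor := Tensor (tmul_subproof a b).

(* a chosen Sweedler representation  t = \sum_(p <- rep t) p.1 (x) p.2 *)
Definition rep (t : tensor) : seq (A * B) :=
  projT1 (cid (asboolW (valP t))).

End Tensor.

Arguments tmul {K A B}.
Arguments rep {K A B}.
Notation "a \ot b" := (tmul a b) (at level 40, left associativity).

Definition tassoc {K : fieldType} {A B C : lmodType K}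
  (t : tensor A (tensor B C)) : tensor (tensor A B) C :=
  \sum_(p <- rep t) \sum_(q <- rep p.2) (p.1 \ot q.1) \ot q.2.

Definition zpow {T : Type} (f fi : T -> T) (m : int) : T -> T :=
  match m with Posz n => iter n f | Negz n => iter n.+1 fi end.

Record HomCoalgebraAx {K : fieldType} (C : lmodType K) (gam gami : C -> C)
    (del : C -> tensor C C) (eps : C -> K) : Prop := {
  hc_gam_lin : linear gam;
  hc_gamK : cancel gam gami;
  hc_gamiK : cancel gami gam;
  hc_del_lin : linear del;
  hc_eps_lin : scalar eps;
  hc_coassoc : forall c,
    tassoc (\sum_(p <- rep (del c)) gami p.1 \ot del p.2)
    = \sum_(p <- rep (del c)) del p.1 \ot gami p.2;
  hc_del_gam : forall c,
    del (gam c) = \sum_(p <- rep (del c)) gam p.1 \ot gam p.2;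
  hc_counit_l : forall c, \sum_(p <- rep (del c)) eps p.2 *: p.1 = gami c;
  hc_counit_r : forall c, \sum_(p <- rep (del c)) eps p.1 *: p.2 = gami c;
  hc_eps_gam : forall c, eps (gam c) = eps c
}.

Definition is_hom_coalgebra {K : fieldType} (C : lmodType K) (gam : C -> C)
    (del : C -> tensor C C) (eps : C -> K) : Prop :=
  exists gami : C -> C, HomCoalgebraAx gam gami del eps.

Record HomAlgebraAx {K : fieldType} (H : lmodType K) (mul : H -> H -> H)
    (one : H) (alpha alphai : H -> H) : Prop := {
  ha_mul_linl : forall b, linear (mul^~ b);
  ha_mul_linr : forall a, linear (mul a);
  ha_alpha_lin : linear alpha;
  ha_alphaK : cancel alpha alphai;
  ha_alphaiK : cancel alphai alpha;
  ha_assoc : forall a b c, mul (alpha a) (mul b c) = mul (mul a b) (alpha c);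
  ha_alpha_mul : forall a b, alpha (mul a b) = mul (alpha a) (alpha b);
  ha_unit_l : forall a, mul one a = alpha a;
  ha_unit_r : forall a, mul a one = alpha a;
  ha_alpha_one : alpha one = one
}.

Record HomBialgebraAx {K : fieldType} (H : lmodType K) (mul : H -> H -> H)
    (one : H) (alpha alphai : H -> H) (del : H -> tensor H H) (eps : H -> K)
    : Prop := {
  hb_alg : HomAlgebraAx mul one alpha alphai;
  hb_coalg : HomCoalgebraAx alpha alphai del eps;
  hb_del_mul : forall h g,
    del (mul h g) = \sum_(p <- rep (del h)) \sum_(q <- rep (del g))
                      mul p.1 q.1 \ot mul p.2 q.2;
  hb_del_one : del one = one \ot one;
  hb_eps_mul : forall h g, eps (mul h g) = eps h * eps g;
  hb_eps_one : eps one = 1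
}.

Record HomComoduleAx {K : fieldType} (H M : lmodType K) (alpha alphai : H -> H)
    (delH : H -> tensor H H) (epsH : H -> K) (mu mui : M -> M)
    (rho : M -> tensor H M) : Prop := {
  hm_mu_lin : linear mu;
  hm_muK : cancel mu mui;
  hm_muiK : cancel mui mu;
  hm_rho_lin : linear rho;
  hm_coassoc : forall x,
    \sum_(p <- rep (rho x)) delH p.1 \ot mui p.2
    = tassoc (\sum_(p <- rep (rho x)) alphai p.1 \ot rho p.2);
  hm_rho_mu : forall x,
    rho (mu x) = \sum_(p <- rep (rho x)) alpha p.1 \ot mu p.2;
  hm_counit : forall x, \sum_(p <- rep (rho x)) epsH p.1 *: p.2 = mui x
}.

Record HomComoduleCoalgebraAx {K : fieldType} (H A : lmodType K)
    (mulH : H -> H -> H) (oneH : H) (alpha alphai : H -> H)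
    (delH : H -> tensor H H) (epsH : H -> K)
    (beta betai : A -> A) (delA : A -> tensor A A) (epsA : A -> K)
    (rho : A -> tensor H A) : Prop := {
  hcc_coalg : HomCoalgebraAx beta betai delA epsA;
  hcc_comod : HomComoduleAx alpha alphai delH epsH beta betai rho;
  hcc_rho_del : forall b,
    \sum_(p <- rep (rho b)) p.1 \ot delA p.2
    = \sum_(p <- rep (delA b)) \sum_(q <- rep (rho p.1)) \sum_(r <- rep (rho p.2))
        mulH q.1 r.1 \ot (q.2 \ot r.2);
  hcc_rho_eps : forall b, \sum_(p <- rep (rho b)) epsA p.2 *: p.1 = epsA b *: oneH
}.

Section Smash.
Context {K : fieldType} (H A : lmodType K) (mulH : H -> H -> H)
  (alpha alphai : H -> H) (delH : H -> tensor H H) (epsH : H -> K)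
  (beta : A -> A) (delA : A -> tensor A A) (epsA : A -> K)
  (rho : A -> tensor H A) (m : int).

Definition smash_gam (t : tensor A H) : tensor A H :=
  \sum_(p <- rep t) beta p.1 \ot alpha p.2.

Definition smash_eps (t : tensor A H) : K :=
  \sum_(p <- rep t) epsA p.1 * epsH p.2.

Definition smash_del (t : tensor A H) : tensor (tensor A H) (tensor A H) :=
  \sum_(p <- rep t) \sum_(q <- rep (delA p.1)) \sum_(r <- rep (rho q.2))
    \sum_(s <- rep (delH p.2))
      (q.1 \ot mulH (zpow alpha alphai m r.1) (alphai s.1))
        \ot (beta r.2 \ot s.2).

End Smash.

From HB Require Import structures.
From mathcomp Require Import all_boot all_algebra.
From mathcomp Require Import boolp classical_sets functions.

Set Implicit Arguments.
Unset Strict Implicit.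
Unset Printing Implicit Defensive.

Import GRing.Theory.
Local Open Scope ring_scope.

(* Every structure map on A >< H is the linear extension of a formula on pure
   tensors a (x) h, and two linear maps out of a tensor product agree as soon
   as they agree on pure tensors.  Each Hom-coalgebra axiom thus reduces to an
   identity between iterated Sweedler sums over a (x) h, which follows from the
   Hom-coalgebra axioms of A and H, the Hom-comodule axioms of the coaction,
   its compatibility with Delta_A and eps_A, multiplicativity of Delta_H and
   eps_H, and the fact that alpha^m is an automorphism of the Hom-bialgebra H.
   Since tensors are given by arbitrarily chosen Sweedler representations, the
   linear extension of a bilinear map must be shown to be independent of the
   representation; this needs enough linear functionals to separate vectors,
   which Zorn's lemma provides. *)

Section Separation.
Local Open Scope classical_set_scope.
Context {K : fieldType} (A : lmodType K).

Definition in_span (l : seq A) (x : A) :=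
  exists k : nat -> K, x = \sum_(i < size l) k i *: l`_i.

Definition lin_closed (U : set A) := forall c x y, U x -> U y -> U (c *: x + y).

Lemma in_span_closed l : lin_closed (in_span l).
Proof.
move=> c x y [k1 ->] [k2 ->]; exists (fun i => c * k1 i + k2 i).
rewrite scaler_sumr -big_split /=; apply: eq_bigr => i _.
by rewrite scalerDl scalerA.
Qed.

Lemma mem_in_span l x : x \in l -> in_span l x.
Proof.
move=> xl; exists (fun i => (i == index x l)%:R).
have il : (index x l < size l)%N by rewrite index_mem.
rewrite (bigD1 (Ordinal il)) //= eqxx scale1r nth_index // big1 ?addr0 //.
by move=> i; rewrite -val_eqE /= => /negbTE ->; rewrite scale0r.
Qed.

Variables (l : seq A) (v : A).
Hypothesis v_notin_span : ~ in_span l v.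

(* The last clause is vacuous for the empty set, so that set0, the union of
   the empty chain, qualifies in Zorn's lemma. *)
Definition avoids_v (U : set A) :=
  [/\ lin_closed U, ~ U v & (exists u, U u) -> forall x, x \in l -> U x].

Lemma exists_maximal_avoids_v :
  exists U, avoids_v U /\ forall B, U `<` B -> ~ avoids_v B.
Proof.
apply: Zorn_bigcup => F FP Ftot; split.
- move=> c x y [X FX Xx] [Y FY Yy].
  have [XY|YX] := Ftot _ _ FX FY.
  + by exists Y => //; have [Yc _ _] := FP _ FY; apply: Yc => //; apply: XY.
  + by exists X => //; have [Xc _ _] := FP _ FX; apply: Xc => //; apply: YX.
- by move=> [X FX Xv]; have [_ Xnv _] := FP _ FX.
- move=> [u [X FX Xu]] x xl; exists X => //.
  by have [_ _ Xl] := FP _ FX; apply: Xl => //; exists u.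
Qed.

Lemma exists_complement_line : exists U : set A,
  [/\ lin_closed U, U 0, ~ U v, (forall x, x \in l -> U x)
    & forall a, exists c u, U u /\ a = u + c *: v].
Proof.
have [U [[Uc Uv Ul] Umax]] := exists_maximal_avoids_v.
have Une : exists u, U u.
  apply: contrapT => Ue; apply: (Umax (in_span l)); last first.
    split=> //; [exact: in_span_closed | move=> _ x; exact: mem_in_span].
  split=> [x Ux|sub]; first by case: Ue; exists x.
  apply: Ue; exists 0; apply: sub.
  by exists (fun _ => 0); rewrite big1 // => i _; rewrite scale0r.
have U0 : U 0.
  by case: Une => u Uu; have := Uc (-1) u u Uu Uu; rewrite scaleN1r addNr.
have UZ c x : U x -> U (c *: x) by move=> Ux; have := Uc c x 0 Ux U0; rewrite addr0.
exists U; split=> // [x|a]; first exact: Ul.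
apply: contrapT => na.
pose B y := exists u c, U u /\ y = u + c *: a.
apply: (Umax B); split.
- by move=> x Ux; exists x, 0; rewrite scale0r addr0.
- move=> sub; apply: na; exists 0, a; rewrite scale0r addr0; split=> //.
  by apply: sub; exists 0, 1; rewrite add0r scale1r.
- move=> c x y [u1 [c1 [U1 ->]]] [u2 [c2 [U2 ->]]].
  exists (c *: u1 + u2), (c * c1 + c2); split; first exact: Uc.
  by rewrite scalerDr scalerDl scalerA addrACA.
- move=> [u [c [Uu e]]]; have [c0|cn0] := eqVneq c 0.
    by apply: Uv; rewrite e c0 scale0r addr0.
  apply: na; exists c^-1, (- (c^-1 *: u)); split; first by rewrite -scaleNr; apply: UZ.
  by rewrite e scalerDr scalerA mulVf // scale1r addKr.
- by move=> _ x xl; exists x, 0; rewrite scale0r addr0; split=> //; apply: Ul.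
Qed.

Lemma scalar_separation :
  exists f : {scalar A}, (forall x, x \in l -> f x = 0) /\ f v = 1.
Proof.
have [U [Uc U0 Uv Ul Udec]] := exists_complement_line.
have coord_uniq u1 u2 c1 c2 : U u1 -> U u2 -> u1 + c1 *: v = u2 + c2 *: v -> c1 = c2.
  move=> U1 U2 e; apply: contrapT => /eqP; rewrite -subr_eq0 => ne; apply: Uv.
  have -> : U v = U ((c1 - c2)^-1 *: (u2 - u1)).
    congr U; apply: (canRL (scalerK ne)); rewrite scalerBl.
    by apply: (addIr (c2 *: v)); rewrite subrK addrAC -e addrAC subrr add0r.
  by rewrite -[_ *: _]addr0; apply: (Uc) => //; rewrite -scaleN1r addrC; apply: Uc.
pose f a := projT1 (cid (Udec a)).
have fP a : exists u, U u /\ a = u + f a *: v by rewrite /f; case: cid.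
have f_lin : scalar f.
  move=> c x y; have [ux [Ux ex]] := fP x; have [uy [Uy ey]] := fP y.
  have [uz [Uz ez]] := fP (c *: x + y).
  apply: (coord_uniq uz (c *: ux + uy)) => //; first exact: Uc.
  by rewrite -ez {1}ex {1}ey scalerDl scalerDr -scalerA addrACA.
pose g : {scalar A} := HB.pack f (GRing.isLinear.Build K A K *%R f f_lin).
exists g; split=> [x xl|] /=.
  have [u [Uu e]] := fP x.
  by apply: (coord_uniq u x) => //; [apply: Ul | rewrite -e scale0r addr0].
have [u [Uu e]] := fP v.
by symmetry; apply: (coord_uniq 0 u) => //; rewrite -e add0r scale1r.
Qed.

End Separation.

Section LinearFun.
Context {K : fieldType} (U V : lmodType K) (f : U -> V).
Hypothesis f_lin : linear f.

Let f_linear : {linear U -> V} := HB.pack f (GRing.isLinear.Build K U V *:%R f f_lin).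

Lemma lin0 : f 0 = 0. Proof. exact: (linear0 f_linear). Qed.
Lemma linD x y : f (x + y) = f x + f y. Proof. exact: (linearD f_linear). Qed.
Lemma linZ c x : f (c *: x) = c *: f x. Proof. exact: (linearZZ f_linear). Qed.
Lemma linN x : f (- x) = - f x. Proof. exact: (linearN f_linear). Qed.
Lemma lin_sum I (r : seq I) (P : pred I) (F : I -> U) :
  f (\sum_(i <- r | P i) F i) = \sum_(i <- r | P i) f (F i).
Proof. exact: (linear_sum f_linear). Qed.

Lemma can_linear (g : V -> U) : cancel f g -> cancel g f -> linear g.
Proof. by move=> fK gK c x y; apply: (can_inj fK); rewrite gK f_lin !gK. Qed.

End LinearFun.

Section TensorLift.
Context {K : fieldType} (A B : lmodType K).

Definition bilin (V : lmodType K) (G : A -> B -> V) :=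
  (forall b, linear (G^~ b)) /\ (forall a, linear (G a)).

Definition tlift (V : lmodType K) (G : A -> B -> V) (t : tensor A B) : V :=
  \sum_(p <- rep t) G p.1 p.2.

Lemma mul_scalar_bilin (f : {scalar A}) (g : {scalar B}) :
  bilin (fun x y => (f x * g y : K^o)).
Proof.
split=> [b c x y|a c x y] /=.
- by rewrite linearP mulrDl -mulrA.
- by rewrite linearP mulrDr mulrCA.
Qed.

(* By bilinearity, a head term (a, b) with a = \sum_i k_i s_i.1 is absorbed
   into the second components of s. *)
Lemma sum_bilin_absorb (s : seq (A * B)) a b (k : nat -> K) (V : lmodType K)
    (G : A -> B -> V) : bilin G ->
  a = \sum_(i < size s) k i *: (nth (0, 0) s i).1 ->
  \sum_(p <- (a, b) :: s) G p.1 p.2 =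
  \sum_(p <- [seq ((nth (0, 0) s i).1, (nth (0, 0) s i).2 + k i *: b)
              | i <- iota 0 (size s)]) G p.1 p.2.
Proof.
move=> [G1 G2] ->; rewrite big_cons big_map (big_nth (0, 0)) /index_iota subn0.
rewrite (lin_sum (G1 b)) -(big_mkord xpredT (fun i => G (k i *: (nth (0, 0) s i).1) b)).
rewrite /index_iota subn0 addrC -big_split /=; apply: eq_bigr => i _.
by rewrite (linD (G2 _)) (linZ (G2 _)) (linZ (G1 b)).
Qed.

(* Induction on the length of s: either s_0.1 lies in the span of the other
   first components and the head term is absorbed, or a separating functional
   shows s_0.2 = 0. *)
Lemma sum_bilin_eq0 (s : seq (A * B)) :
  (forall (f : {scalar A}) (g : {scalar B}), \sum_(p <- s) f p.1 * g p.2 = 0) ->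
  forall (V : lmodType K) (G : A -> B -> V), bilin G -> \sum_(p <- s) G p.1 p.2 = 0.
Proof.
move: {2}(size s) (leqnn (size s)) => n; elim: n s => [|n IH] [|[a b] s] //=;
  try by move=> *; rewrite big_nil.
rewrite ltnS => sn s0 V G Gb.
have [[k ek]|a_indep] := pselect (in_span (map fst s) a).
  rewrite size_map in ek.
  have ek' : a = \sum_(i < size s) k i *: (nth (0, 0) s i).1.
    by rewrite ek; apply: eq_bigr => i _; rewrite (nth_map (0, 0)).
  rewrite (sum_bilin_absorb b Gb ek'); apply: IH => //; first by rewrite size_map size_iota.
  by move=> f g; rewrite -(sum_bilin_absorb b (mul_scalar_bilin f g) ek') s0.
have [f [f0 f1]] := scalar_separation a_indep.
have gb (g : {scalar B}) : g b = 0.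
  have := s0 f g; rewrite big_cons f1 mul1r big1_seq ?addr0 // => p /andP[_ ps].
  by rewrite f0 ?mul0r // map_f.
have b0 : b = 0.
  apply: contrapT => bn0.
  have b_indep : ~ in_span [::] b by move=> [k' eb]; apply: bn0; rewrite eb big_ord0.
  have [g [_ g1]] := scalar_separation b_indep.
  by move: (gb g); rewrite g1 => /eqP; rewrite oner_eq0.
rewrite big_cons b0 (lin0 (Gb.2 a)) add0r; apply: IH => // f' g.
by move: (s0 f' g); rewrite big_cons b0 linear0 mulr0 add0r.
Qed.

Lemma dual2P c (d1 d2 : dual2 A B) f g : (c *: d1 + d2) f g = c * d1 f g + d2 f g.
Proof. by []. Qed.

Lemma repE (t : tensor A B) : tensor_val t = tens_of (rep t).
Proof. exact: (projT2 (cid (asboolW (valP t)))). Qed.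

Lemma tlift_tens_of (V : lmodType K) (G : A -> B -> V) (t : tensor A B) s :
  bilin G -> tensor_val t = tens_of s -> tlift G t = \sum_(p <- s) G p.1 p.2.
Proof.
move=> bG ts; apply/eqP; rewrite -subr_eq0; apply/eqP.
have e : \sum_(p <- rep t) G p.1 p.2 + \sum_(p <- s) G (- p.1) p.2 = 0.
  have := @sum_bilin_eq0 (rep t ++ [seq (- p.1, p.2) | p <- s]) _ V G bG.
  rewrite big_cat big_map; apply=> f g; rewrite big_cat big_map /=.
  have /(congr1 (fun d => d f g)) := repE t; rewrite ts /tens_of => <-.
  by rewrite -big_split /= big1 // => p _; rewrite linearN mulNr addrN.
rewrite -[RHS]e; congr (_ + _); rewrite -sumrN.
by apply: eq_bigr => p _; rewrite (linN (bG.1 _)).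
Qed.

Lemma tlift_tmul (V : lmodType K) (G : A -> B -> V) a b :
  bilin G -> tlift G (a \ot b) = G a b.
Proof. by move=> bG; rewrite (tlift_tens_of (s := [:: (a, b)]) bG) ?big_seq1. Qed.

Lemma tlift_linear (V : lmodType K) (G : A -> B -> V) : bilin G -> linear (tlift G).
Proof.
move=> bG c t1 t2.
rewrite (tlift_tens_of (s := [seq (c *: p.1, p.2) | p <- rep t1] ++ rep t2) bG).
  rewrite big_cat big_map /= scaler_sumr; congr (_ + _).
  by apply: eq_bigr => p _; rewrite (linZ (bG.1 _)).
apply: funext => f; apply: funext => g.
rewrite /= dual2P !repE /tens_of big_cat big_map /= mulr_sumr.
by congr (_ + _); apply: eq_bigr => p _; rewrite linearZ; exact: mulrA.
Qed.

Lemma tmul_bilin : bilin (@tmul K A B).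
Proof.
split=> [b c x y|a c x y]; apply: val_inj; apply: funext => f; apply: funext => g.
- by rewrite /= dual2P /tens_of !big_seq1 /= linearP mulrDl mulrA.
- by rewrite /= dual2P /tens_of !big_seq1 /= linearP mulrDr mulrCA.
Qed.

Lemma tensor_val_sum (r : seq (A * B)) (F : A * B -> tensor A B) :
  tensor_val (\sum_(p <- r) F p) = \sum_(p <- r) tensor_val (F p).
Proof. by elim: r => [|p r IH]; rewrite ?big_nil ?big_cons //= IH. Qed.

Lemma tlift_tmul_id (t : tensor A B) : tlift tmul t = t.
Proof.
apply: (val_inj : injective (@tensor_val K A B)).
rewrite /tlift tensor_val_sum repE.
apply: funext => f; apply: funext => g; rewrite !fct_sumE /tens_of.
by apply: eq_bigr => p _; rewrite /= /tens_of big_seq1.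
Qed.

Lemma tlift_comp (V W : lmodType K) (G : A -> B -> V) (phi : V -> W) t :
  linear phi -> phi (tlift G t) = tlift (fun x y => phi (G x y)) t.
Proof. by move=> phi_lin; rewrite /tlift (lin_sum phi_lin). Qed.

Lemma eq_tlift (V : lmodType K) (G G' : A -> B -> V) t :
  (forall x y, G x y = G' x y) -> tlift G t = tlift G' t.
Proof. by move=> e; apply: eq_bigr => p _; rewrite e. Qed.

Lemma tlift_scale (V : lmodType K) c (G : A -> B -> V) t :
  tlift (fun x y => c *: G x y) t = c *: tlift G t.
Proof. by rewrite /tlift scaler_sumr. Qed.

Lemma tensor_ext (V : lmodType K) (phi psi : tensor A B -> V) :
  linear phi -> linear psi -> (forall a b, phi (a \ot b) = psi (a \ot b)) ->
  forall t, phi t = psi t.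
Proof.
move=> phi_lin psi_lin e t; rewrite -(tlift_tmul_id t).
by rewrite (tlift_comp _ _ phi_lin) (tlift_comp _ _ psi_lin); apply: eq_tlift.
Qed.

End TensorLift.

Lemma tlift_tlift_tmul {K : fieldType} (A B C D V : lmodType K) (G : C -> D -> V)
    (F1 : A -> B -> C) (F2 : A -> B -> D) t :
  bilin G -> tlift G (tlift (fun u v => F1 u v \ot F2 u v) t) =
             tlift (fun u v => G (F1 u v) (F2 u v)) t.
Proof.
move=> bG; rewrite (tlift_comp _ _ (tlift_linear bG)); apply: eq_tlift => x y.
exact: tlift_tmul.
Qed.

Lemma exchange_tlift {K : fieldType} (X1 Y1 X2 Y2 V : lmodType K)
    (G : X1 -> Y1 -> X2 -> Y2 -> V) (t1 : tensor X1 Y1) (t2 : tensor X2 Y2) :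
  tlift (fun x y => tlift (G x y) t2) t1 =
  tlift (fun u v => tlift (fun x y => G x y u v) t1) t2.
Proof. exact: exchange_big. Qed.

Section LinearClosure.
Context {K : fieldType}.
Implicit Types U V W X Y Z : lmodType K.

Lemma lin_id U : linear (fun x : U => x). Proof. by []. Qed.

Lemma lin_comp U V W (f : V -> W) (h : U -> V) :
  linear f -> linear h -> linear (fun x => f (h x)).
Proof. by move=> lf lh c x y; rewrite lh lf. Qed.

Lemma scal_comp U V (e : V -> K) (h : U -> V) :
  scalar e -> linear h -> scalar (fun x => e (h x)).
Proof. by move=> le lh c x y; rewrite lh le. Qed.

Lemma lin_add U V (h1 h2 : U -> V) :
  linear h1 -> linear h2 -> linear (fun x => h1 x + h2 x).
Proof. by move=> l1 l2 c x y; rewrite l1 l2 scalerDr addrACA. Qed.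

Lemma lin_scale U V (h : U -> V) c : linear h -> linear (fun x => c *: h x).
Proof. by move=> lh d x y; rewrite lh scalerDr !scalerA mulrC. Qed.

Lemma lin_scale_fun U V (e : U -> K) (v : V) : scalar e -> linear (fun x => e x *: v).
Proof. by move=> le c x y; rewrite le scalerDl scalerA. Qed.

Lemma lin_app2l U X Y V (F : X -> Y -> V) (h : U -> X) y :
  (forall b, linear (F^~ b)) -> linear h -> linear (fun x => F (h x) y).
Proof. by move=> lF; apply: (lin_comp (lF y)). Qed.

Lemma lin_app2r U X Y V (F : X -> Y -> V) (h : U -> Y) x :
  (forall a, linear (F a)) -> linear h -> linear (fun u => F x (h u)).
Proof. by move=> lF; apply: (lin_comp (lF x)). Qed.

Lemma lin_app3l U X Y Z V (F : X -> Y -> Z -> V) (h : U -> X) y z :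
  (forall b c, linear (fun x => F x b c)) -> linear h -> linear (fun u => F (h u) y z).
Proof. by move=> lF; apply: (lin_comp (lF y z)). Qed.

Lemma lin_app3m U X Y Z V (F : X -> Y -> Z -> V) (h : U -> Y) x z :
  (forall a c, linear (fun y => F a y c)) -> linear h -> linear (fun u => F x (h u) z).
Proof. by move=> lF; apply: (lin_comp (lF x z)). Qed.

Lemma lin_tmul_l U X Y (h : U -> X) (y : Y) : linear h -> linear (fun u => h u \ot y).
Proof. exact: (lin_comp ((tmul_bilin X Y).1 y)). Qed.

Lemma lin_tmul_r U X Y (h : U -> Y) (x : X) : linear h -> linear (fun u => x \ot h u).
Proof. exact: (lin_comp ((tmul_bilin X Y).2 x)). Qed.

Lemma lin_tlift_arg U X Y V (G : X -> Y -> V) (h : U -> tensor X Y) :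
  bilin G -> linear h -> linear (fun u => tlift G (h u)).
Proof. by move=> bG; apply: (lin_comp (tlift_linear bG)). Qed.

Lemma lin_tlift_fun U X Y V (G : U -> X -> Y -> V) (t : tensor X Y) :
  (forall a b, linear (fun u => G u a b)) -> linear (fun u => tlift (G u) t).
Proof.
move=> lG c x y; rewrite /tlift scaler_sumr -big_split; apply: eq_bigr => p _.
exact: lG.
Qed.

End LinearClosure.

(* [lin] proves linearity of a function assembled from tensors, tlift, sums,
   scalings and the (multi)linear maps available as hypotheses, recursing on
   the body of the function; [bil] and [tril] do the same for each argument of
   a bilinear or trilinear map. *)
(* Hypotheses are tried up to conversion, so linearity facts about large
   defined maps are best kept out of the context when calling [lin]. *)
Ltac lin_hyp :=
  match goal with
  | Hf : @GRing.linear_for _ _ _ _ _ |- _ => exact: Hf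
  | Hf : forall _, @GRing.linear_for _ _ _ _ _ |- _ => exact: Hf
  | Hf : forall _ _, @GRing.linear_for _ _ _ _ _ |- _ => exact: Hf
  end.
Ltac slin := cbv beta; first
  [ lin_hyp
  | refine (@scal_comp _ _ _ _ _ _ _); [lin_hyp | lin] ]
with bil := split => ? ; cbv beta; lin
with tril := split => ? ? ; cbv beta; lin
with lin := cbv beta delta [Datatypes.id]; match goal with
 | |- @GRing.linear_for ?R ?U ?V ?s ?f =>
     lazymatch f with (fun _ => _) => fail | _ =>
       change (@GRing.linear_for R U V s (fun x => f x)); lin end
 | |- @GRing.linear_for _ _ _ _ (fun x => x) => exact: lin_id
 | |- @GRing.linear_for _ _ _ _ (fun x => tlift ?G (@?h x)) =>
     refine (@lin_tlift_arg _ _ _ _ _ _ _ _ _); [bil | lin]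
 | |- @GRing.linear_for _ _ _ _ (fun x => tlift (@?G x) ?t) =>
     refine (@lin_tlift_fun _ _ _ _ _ _ _ _) => ? ?; lin
 | |- @GRing.linear_for _ _ _ _ (fun x => tmul (@?h x) ?b) =>
     refine (@lin_tmul_l _ _ _ _ _ _ _); lin
 | |- @GRing.linear_for _ _ _ _ (fun x => tmul ?a (@?h x)) =>
     refine (@lin_tmul_r _ _ _ _ _ _ _); lin
 | |- @GRing.linear_for _ _ _ _ (fun x => (@?h1 x) + (@?h2 x)) =>
     refine (@lin_add _ _ _ _ _ _ _); lin
 | |- @GRing.linear_for _ _ _ _ (fun x => ?c *: (@?h x)) =>
     refine (@lin_scale _ _ _ _ _ _); lin
 | |- @GRing.linear_for _ _ _ _ (fun x => (@?e x) *: ?v) =>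
     refine (@lin_scale_fun _ _ _ _ _ _); slin
 | |- @GRing.linear_for _ _ _ _ (fun x => ?f (@?h x)) =>
     refine (@lin_comp _ _ _ _ f _ _ _); [lin_hyp | lin]
 | |- @GRing.linear_for _ _ _ _ (fun x => ?F (@?h x) ?c ?d) =>
     refine (@lin_app3l _ _ _ _ _ _ F _ _ _ _ _); [lin_hyp | lin]
 | |- @GRing.linear_for _ _ _ _ (fun x => ?F ?c (@?h x) ?d) =>
     refine (@lin_app3m _ _ _ _ _ _ F _ _ _ _ _); [lin_hyp | lin]
 | |- @GRing.linear_for _ _ _ _ (fun x => ?F (@?h x) ?c) =>
     refine (@lin_app2l _ _ _ _ _ F _ _ _ _); [lin_hyp | lin]
 | |- @GRing.linear_for _ _ _ _ (fun x => ?F ?c (@?h x)) =>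
     refine (@lin_app2r _ _ _ _ _ F _ _ _ _); [lin_hyp | lin]
 | |- _ => lin_hyp
 | |- ?g => fail "lin: cannot handle" g
 end.

Section Trilinear.
Context {K : fieldType} (X Y Z : lmodType K).

Definition trilin (V : lmodType K) (T : X -> Y -> Z -> V) :=
  [/\ (forall y z, linear (fun x => T x y z)),
      (forall x z, linear (fun y => T x y z)) &
      (forall x y, linear (fun z => T x y z))].

Definition tlift3l (V : lmodType K) (T : X -> Y -> Z -> V) (t : tensor (tensor X Y) Z) : V :=
  tlift (fun u z => tlift (fun x y => T x y z) u) t.

Definition tlift3r (V : lmodType K) (T : X -> Y -> Z -> V) (t : tensor X (tensor Y Z)) : V :=
  tlift (fun x w => tlift (fun y z => T x y z) w) t.

Lemma tassocE (t : tensor X (tensor Y Z)) :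
  tassoc t = tlift3r (fun x y z => (x \ot y) \ot z) t.
Proof. by []. Qed.

Variables (V : lmodType K) (T : X -> Y -> Z -> V).
Hypothesis T_trilin : trilin T.

Lemma tlift3l_tmul x y z : tlift3l T ((x \ot y) \ot z) = T x y z.
Proof. by case: T_trilin => *; rewrite /tlift3l !tlift_tmul //; bil. Qed.

Lemma tlift3r_tmul x y z : tlift3r T (x \ot (y \ot z)) = T x y z.
Proof. by case: T_trilin => *; rewrite /tlift3r !tlift_tmul //; bil. Qed.

Lemma tlift3l_linear : linear (tlift3l T).
Proof. by case: T_trilin => *; apply: tlift_linear; bil. Qed.

Lemma tlift3r_linear : linear (tlift3r T).
Proof. by case: T_trilin => *; apply: tlift_linear; bil. Qed.

Lemma tlift3l_tassoc t : tlift3l T (tassoc t) = tlift3r T t.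
Proof.
rewrite tassocE /tlift3r (tlift_comp _ _ tlift3l_linear); apply: eq_tlift => x w.
rewrite (tlift_comp _ _ tlift3l_linear); apply: eq_tlift => y z.
exact: tlift3l_tmul.
Qed.

End Trilinear.

Lemma tassoc_linear {K : fieldType} (X Y Z : lmodType K) : linear (@tassoc K X Y Z).
Proof.
have tT : trilin (fun (x : X) (y : Y) (z : Z) => (x \ot y) \ot z) by tril.
by move=> c u v; rewrite !tassocE (tlift3r_linear tT).
Qed.

Lemma tassoc_tmul {K : fieldType} (X Y Z : lmodType K) (x : X) (w : tensor Y Z) :
  tassoc (x \ot w) = tlift (fun y z => (x \ot y) \ot z) w.
Proof. by rewrite tassocE /tlift3r tlift_tmul //; bil. Qed.

Section HomCoalgebraSweedler.
Context {K : fieldType} (C : lmodType K) (gam gami : C -> C)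
  (del : C -> tensor C C) (eps : C -> K).
Hypothesis HC : HomCoalgebraAx gam gami del eps.

Let gam_lin := hc_gam_lin HC.

Lemma hc_gami_lin : linear gami.
Proof. exact: (can_linear gam_lin (hc_gamK HC) (hc_gamiK HC)). Qed.

Lemma hc_eps_gami c : eps (gami c) = eps c.
Proof. by rewrite -{2}(hc_gamiK HC c) (hc_eps_gam HC). Qed.

Context (V : lmodType K).

Lemma tlift_del_gam (G : C -> C -> V) c : bilin G ->
  tlift G (del (gam c)) = tlift (fun x y => G (gam x) (gam y)) (del c).
Proof.
move=> bG; have -> : del (gam c) = tlift (fun x y => gam x \ot gam y) (del c).
  exact: (hc_del_gam HC).
exact: tlift_tlift_tmul.
Qed.

Lemma tlift_del_gami (G : C -> C -> V) c : bilin G ->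
  tlift G (del (gami c)) = tlift (fun x y => G (gami x) (gami y)) (del c).
Proof.
move=> [G1 G2]; have gami_lin := hc_gami_lin.
rewrite -{2}(hc_gamiK HC c) tlift_del_gam; last by bil.
by apply: eq_tlift => x y; rewrite !(hc_gamK HC).
Qed.

Lemma tlift_del_coassoc (T : C -> C -> C -> V) c : trilin T ->
  tlift (fun x y => tlift (fun x1 x2 => T x1 x2 y) (del x)) (del c) =
  tlift (fun x y => tlift (fun y1 y2 => T (gami x) y1 (gam y2)) (del y)) (del c).
Proof.
move=> [T1 T2 T3]; have gami_lin := hc_gami_lin.
pose T' x y z := T x y (gam z).
have tT' : trilin T' by rewrite /T'; tril.
have : tlift3l T' (tassoc (tlift (fun x y => gami x \ot del y) (del c)))
     = tlift3l T' (tlift (fun x y => del x \ot gami y) (del c))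
  := congr1 (tlift3l T') (hc_coassoc HC c).
rewrite tlift3l_tassoc // /tlift3r /tlift3l !tlift_tlift_tmul; try by case: tT' => *; bil.
by rewrite /T' => ->; apply: eq_tlift => x y; rewrite (hc_gamiK HC).
Qed.

Lemma tlift_del_coassoc_r (T : C -> C -> C -> V) c : trilin T ->
  tlift (fun x y => tlift (fun y1 y2 => T x y1 y2) (del y)) (del c) =
  tlift (fun x y => tlift (fun x1 x2 => T (gam x1) x2 (gami y)) (del x)) (del c).
Proof.
move=> [T1 T2 T3]; have gami_lin := hc_gami_lin.
rewrite (tlift_del_coassoc (T := fun x y z => T (gam x) y (gami z))); last by tril.
by apply: eq_tlift => x y; apply: eq_tlift => y1 y2; rewrite (hc_gamiK HC) (hc_gamK HC).
Qed.

Lemma tlift_del_counitl (psi : C -> V) c : linear psi ->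
  tlift (fun x y => eps y *: psi x) (del c) = psi (gami c).
Proof.
move=> psi_lin; rewrite -(hc_counit_l HC c) (lin_sum psi_lin).
by apply: eq_bigr => p _; rewrite (linZ psi_lin).
Qed.

Lemma tlift_del_counitr (psi : C -> V) c : linear psi ->
  tlift (fun x y => eps x *: psi y) (del c) = psi (gami c).
Proof.
move=> psi_lin; rewrite -(hc_counit_r HC c) (lin_sum psi_lin).
by apply: eq_bigr => p _; rewrite (linZ psi_lin).
Qed.

End HomCoalgebraSweedler.

Section HomComoduleSweedler.
Context {K : fieldType} (H M : lmodType K) (alpha alphai : H -> H)
  (delH : H -> tensor H H) (epsH : H -> K) (mu mui : M -> M)
  (rho : M -> tensor H M).
Hypothesis HM : HomComoduleAx alpha alphai delH epsH mu mui rho.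
Hypotheses (alphaK : cancel alpha alphai) (alphai_lin : linear alphai).

Let mu_lin := hm_mu_lin HM.
Let mui_lin := can_linear mu_lin (hm_muK HM) (hm_muiK HM).

Context (V : lmodType K).

Lemma tlift_rho_mu (G : H -> M -> V) c : bilin G ->
  tlift G (rho (mu c)) = tlift (fun x y => G (alpha x) (mu y)) (rho c).
Proof.
move=> bG; have -> : rho (mu c) = tlift (fun x y => alpha x \ot mu y) (rho c).
  exact: (hm_rho_mu HM).
exact: tlift_tlift_tmul.
Qed.

Lemma tlift_rho_mui (G : H -> M -> V) c : bilin G ->
  tlift G (rho (mui c)) = tlift (fun x y => G (alphai x) (mui y)) (rho c).
Proof.
move=> [G1 G2]; rewrite -{2}(hm_muiK HM c) tlift_rho_mu; last by bil.
by apply: eq_tlift => x y; rewrite alphaK (hm_muK HM).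
Qed.

Lemma tlift_rho_coassoc (T : H -> H -> M -> V) c : trilin T ->
  tlift (fun x z => tlift (fun x1 x2 => T x1 x2 z) (delH x)) (rho c) =
  tlift (fun x y => tlift (fun y1 y2 => T (alphai x) y1 (mu y2)) (rho y)) (rho c).
Proof.
move=> [T1 T2 T3]; pose T' x y z := T x y (mu z).
have tT' : trilin T' by rewrite /T'; tril.
have : tlift3l T' (tlift (fun x y => delH x \ot mui y) (rho c))
     = tlift3l T' (tassoc (tlift (fun x y => alphai x \ot rho y) (rho c)))
  := congr1 (tlift3l T') (hm_coassoc HM c).
rewrite tlift3l_tassoc // /tlift3r /tlift3l !tlift_tlift_tmul; try by case: tT' => *; bil.
by rewrite /T' => <-; apply: eq_tlift => x y; rewrite (hm_muiK HM).
Qed.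

Lemma tlift_rho_counit (psi : M -> V) c : linear psi ->
  tlift (fun x y => epsH x *: psi y) (rho c) = psi (mui c).
Proof.
move=> psi_lin; rewrite -(hm_counit HM c) (lin_sum psi_lin).
by apply: eq_bigr => p _; rewrite (linZ psi_lin).
Qed.

End HomComoduleSweedler.

Section HomComoduleCoalgebraSweedler.
Context {K : fieldType} (H A : lmodType K) (mulH : H -> H -> H) (oneH : H)
  (alpha alphai : H -> H) (delH : H -> tensor H H) (epsH : H -> K)
  (beta betai : A -> A) (delA : A -> tensor A A) (epsA : A -> K)
  (rho : A -> tensor H A).
Hypothesis HCC : HomComoduleCoalgebraAx mulH oneH alpha alphai delH epsH
  beta betai delA epsA rho.


Context (V : lmodType K).

Lemma tlift_rho_del (T : H -> A -> A -> V) b : trilin T ->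
  tlift (fun x w => tlift (fun y z => T x y z) (delA w)) (rho b) =
  tlift (fun p1 p2 => tlift (fun u1 u2 => tlift (fun w1 w2 =>
    T (mulH u1 w1) u2 w2) (rho p2)) (rho p1)) (delA b).
Proof.
move=> tT; have [T1 T2 T3] := tT.
have : tlift3r T (tlift (fun x y => x \ot delA y) (rho b))
  = tlift3r T (tlift (fun p1 p2 => tlift (fun u1 u2 => tlift (fun w1 w2 =>
      mulH u1 w1 \ot (u2 \ot w2)) (rho p2)) (rho p1)) (delA b))
  := congr1 (tlift3r T) (hcc_rho_del HCC b).
rewrite [X in X = _ -> _]/tlift3r tlift_tlift_tmul; last by bil.
move=> ->; rewrite (tlift_comp _ _ (tlift3r_linear tT)); apply: eq_tlift => x y.
rewrite (tlift_comp _ _ (tlift3r_linear tT)); apply: eq_tlift => u1 u2.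
rewrite (tlift_comp _ _ (tlift3r_linear tT)); apply: eq_tlift => w1 w2.
exact: tlift3r_tmul.
Qed.

Lemma tlift_rho_eps (psi : H -> V) c : linear psi ->
  tlift (fun x y => epsA y *: psi x) (rho c) = epsA c *: psi oneH.
Proof.
move=> psi_lin; rewrite -(linZ psi_lin) -(hcc_rho_eps HCC c) (lin_sum psi_lin).
by apply: eq_bigr => p _; rewrite (linZ psi_lin).
Qed.

End HomComoduleCoalgebraSweedler.

Lemma zpow_ind {T : Type} (f fi : T -> T) (P : (T -> T) -> Prop) m :
  P id -> (forall g, P g -> P (f \o g)) -> (forall g, P g -> P (fi \o g)) ->
  P (zpow f fi m).
Proof.
move=> Pid Pf Pfi; case: m => n /=; first by elim: n => // n; apply: Pf.
by elim: n => [|n]; [apply: Pfi | apply: Pfi].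
Qed.

Section HomBialgebraFacts.
Context {K : fieldType} (H : lmodType K) (mul : H -> H -> H) (one : H)
  (alpha alphai : H -> H) (del : H -> tensor H H) (eps : H -> K).
Hypothesis HB : HomBialgebraAx mul one alpha alphai del eps.

Let HA := hb_alg HB.
Let HC := hb_coalg HB.
Let alphaK := ha_alphaK HA.
Let alphaiK := ha_alphaiK HA.

Lemma alphai_mul a b : alphai (mul a b) = mul (alphai a) (alphai b).
Proof. by apply: (can_inj alphaK); rewrite alphaiK (ha_alpha_mul HA) !alphaiK. Qed.

Lemma alphai_one : alphai one = one.
Proof. by rewrite -{1}(ha_alpha_one HA) alphaK. Qed.

Variable m : int.
Local Notation za := (zpow alpha alphai m).

Lemma zpow_lin : linear za.
Proof.
have alpha_lin := ha_alpha_lin HA; have alphai_lin := hc_gami_lin HC.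
by apply: zpow_ind => [|g g_lin|g g_lin]; [exact: lin_id | apply: lin_comp ..].
Qed.

Lemma zpow_alpha x : za (alpha x) = alpha (za x).
Proof.
apply: (zpow_ind (P := fun g => forall x, g (alpha x) = alpha (g x))) => //= g gP y.
  by rewrite gP.
by rewrite gP alphaK alphaiK.
Qed.

Lemma zpow_alphai x : za (alphai x) = alphai (za x).
Proof. by rewrite -{2}(alphaiK x) zpow_alpha alphaK. Qed.

Lemma zpow_mul x y : za (mul x y) = mul (za x) (za y).
Proof.
apply: (zpow_ind (P := fun g => forall x y, g (mul x y) = mul (g x) (g y))) => //=.
  by move=> g gP x' y'; rewrite gP (ha_alpha_mul HA).
by move=> g gP x' y'; rewrite gP alphai_mul.
Qed.

Lemma zpow_one : za one = one.
Proof.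
apply: (zpow_ind (P := fun g => g one = one)) => //= g ->.
  exact: (ha_alpha_one HA).
exact: alphai_one.
Qed.

Lemma eps_zpow x : eps (za x) = eps x.
Proof.
apply: (zpow_ind (P := fun g => forall x, eps (g x) = eps x)) => //= g gP y.
  by rewrite (hc_eps_gam HC).
by rewrite (hc_eps_gami HC).
Qed.

Context (V : lmodType K).

Lemma tlift_del_zpow (G : H -> H -> V) c : bilin G ->
  tlift G (del (za c)) = tlift (fun x y => G (za x) (za y)) (del c).
Proof.
have alphai_lin := hc_gami_lin HC; have alpha_lin := ha_alpha_lin HA.
move: G c; apply: (zpow_ind (P := fun g => forall (G : H -> H -> V) c, bilin G ->
  tlift G (del (g c)) = tlift (fun x y => G (g x) (g y)) (del c))) => /=.
- by move=> G c _; apply: eq_tlift.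
- move=> g gP G c [G1 G2]; rewrite (tlift_del_gam HC); last by bil.
  by rewrite gP //; bil.
- move=> g gP G c [G1 G2]; rewrite (tlift_del_gami HC); last by bil.
  by rewrite gP //; bil.
Qed.

Lemma tlift_del_mul (G : H -> H -> V) g k : bilin G ->
  tlift G (del (mul g k)) =
  tlift (fun p1 p2 => tlift (fun q1 q2 => G (mul p1 q1) (mul p2 q2)) (del k)) (del g).
Proof.
move=> bG; have -> : del (mul g k) = tlift (fun p1 p2 =>
    tlift (fun q1 q2 => mul p1 q1 \ot mul p2 q2) (del k)) (del g).
  exact: (hb_del_mul HB).
rewrite (tlift_comp _ _ (tlift_linear bG)); apply: eq_tlift => x y.
rewrite (tlift_comp _ _ (tlift_linear bG)); apply: eq_tlift => u v.
exact: tlift_tmul.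
Qed.

End HomBialgebraFacts.

Section SmashCounit.
Context {K : fieldType} (H A : lmodType K) (epsH : H -> K) (epsA : A -> K).
Hypotheses (epsH_lin : scalar epsH) (epsA_lin : scalar epsA).

Lemma smash_eps_bilin : bilin (fun a h => (epsA a * epsH h : K^o)).
Proof.
split=> [b c x y|a c x y] /=.
- by rewrite epsA_lin mulrDl -mulrA.
- by rewrite epsH_lin mulrDr mulrCA.
Qed.

Lemma smash_eps_lin : scalar (smash_eps epsH epsA).
Proof. exact: (tlift_linear smash_eps_bilin). Qed.

Lemma smash_eps_tmul a h : smash_eps epsH epsA (a \ot h) = epsA a * epsH h.
Proof. exact: (tlift_tmul a h smash_eps_bilin). Qed.

End SmashCounit.

Section SmashTwist.
Context {K : fieldType} (H A : lmodType K) (alpha : H -> H) (beta : A -> A).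
Hypotheses (alpha_lin : linear alpha) (beta_lin : linear beta).

Lemma smash_gam_bilin : bilin (fun a h => beta a \ot alpha h).
Proof. by bil. Qed.

Lemma smash_gam_lin : linear (smash_gam alpha beta).
Proof. exact: (tlift_linear smash_gam_bilin). Qed.

Lemma smash_gam_tmul a h : smash_gam alpha beta (a \ot h) = beta a \ot alpha h.
Proof. exact: (tlift_tmul a h smash_gam_bilin). Qed.

End SmashTwist.

Lemma smash_gamK {K : fieldType} (H A : lmodType K) (alpha alphai : H -> H)
    (beta betai : A -> A) :
  linear alpha -> linear beta ->
  linear alphai -> linear betai -> cancel alpha alphai -> cancel beta betai ->
  cancel (smash_gam alpha beta) (smash_gam alphai betai).
Proof.
move=> alpha_lin beta_lin alphai_lin betai_lin alphaK betaK.
apply: tensor_ext => [||a h]; first exact: lin_comp (smash_gam_lin _ _) (smash_gam_lin _ _).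
  exact: lin_id.
by rewrite !smash_gam_tmul // alphaK betaK.
Qed.

Ltac under_tlift n tac :=
  lazymatch n with
  | 0%nat => tac
  | S ?k => under eq_tlift => ? ? do (under_tlift k tac)
  end.

Section SmashCoproduct.
Context {K : fieldType} (H A : lmodType K) (mulH : H -> H -> H) (oneH : H)
  (alpha alphai : H -> H) (delH : H -> tensor H H) (epsH : H -> K)
  (beta betai : A -> A) (delA : A -> tensor A A) (epsA : A -> K)
  (rho : A -> tensor H A) (m : int).
Hypotheses (HB : HomBialgebraAx mulH oneH alpha alphai delH epsH)
  (HCC : HomComoduleCoalgebraAx mulH oneH alpha alphai delH epsH
           beta betai delA epsA rho).

Local Notation za := (zpow alpha alphai m).
Local Notation gam := (smash_gam alpha beta).
Local Notation gami := (smash_gam alphai betai).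
Local Notation Del := (smash_del mulH alpha alphai delH beta delA rho m).
Local Notation Eps := (smash_eps epsH epsA).

Let HA := hb_alg HB.
Let HCH := hb_coalg HB.
Let HCA := hcc_coalg HCC.
Let HM := hcc_comod HCC.
Let mulH_linl := ha_mul_linl HA.
Let mulH_linr := ha_mul_linr HA.
Let alpha_lin := ha_alpha_lin HA.
Let alphai_lin := hc_gami_lin HCH.
Let beta_lin := hc_gam_lin HCA.
Let betai_lin := hc_gami_lin HCA.
Let delH_lin := hc_del_lin HCH.
Let delA_lin := hc_del_lin HCA.
Let epsH_lin := hc_eps_lin HCH.
Let epsA_lin := hc_eps_lin HCA.
Let rho_lin := hm_rho_lin HM.
Let za_lin := zpow_lin HB m.
Let alphaK := ha_alphaK HA.
Let alphaiK := ha_alphaiK HA.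
Let betaK := hc_gamK HCA.
Let betaiK := hc_gamiK HCA.

Definition smash_del_pure (a : A) (h : H) : tensor (tensor A H) (tensor A H) :=
  tlift (fun q1 q2 => tlift (fun r1 r2 => tlift (fun s1 s2 =>
    (q1 \ot mulH (za r1) (alphai s1)) \ot (beta r2 \ot s2)) (delH h)) (rho q2)) (delA a).

Lemma smash_del_pure_bilin : bilin smash_del_pure.
Proof. by rewrite /smash_del_pure; bil. Qed.

Lemma smash_del_lin : linear Del.
Proof. exact: (tlift_linear smash_del_pure_bilin). Qed.

Lemma smash_del_tmul a h : Del (a \ot h) = smash_del_pure a h.
Proof. exact: (tlift_tmul a h smash_del_pure_bilin). Qed.

Lemma smash_del_pureE (W : lmodType K) (phi : tensor (tensor A H) (tensor A H) -> W) a h :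
  linear phi -> phi (smash_del_pure a h) =
  tlift (fun q1 q2 => tlift (fun r1 r2 => tlift (fun s1 s2 =>
    phi ((q1 \ot mulH (za r1) (alphai s1)) \ot (beta r2 \ot s2))) (delH h)) (rho q2)) (delA a).
Proof.
move=> phi_lin; rewrite /smash_del_pure (tlift_comp _ _ phi_lin); apply: eq_tlift => q1 q2.
by rewrite (tlift_comp _ _ phi_lin); apply: eq_tlift => r1 r2; rewrite (tlift_comp _ _ phi_lin).
Qed.

Lemma smash_eps_gam t : Eps (gam t) = Eps t.
Proof.
have Eps_lin := smash_eps_lin epsH_lin epsA_lin.
move: t; apply: (tensor_ext (V := K^o)) => [||a h]; first exact: lin_comp (smash_gam_lin _ _).
  exact: Eps_lin.
by rewrite smash_gam_tmul // !smash_eps_tmul // (hc_eps_gam HCA) (hc_eps_gam HCH).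
Qed.

Lemma smash_del_gam t : Del (gam t) = tlift (fun u w => gam u \ot gam w) (Del t).
Proof.
have gam_lin := smash_gam_lin alpha_lin beta_lin.
move: t; apply: tensor_ext => [||a h].
- exact: lin_comp smash_del_lin gam_lin.
- by apply: (lin_comp _ smash_del_lin); apply: tlift_linear; bil.
rewrite smash_gam_tmul // !smash_del_tmul smash_del_pureE; last by lin.
rewrite {1}/smash_del_pure (tlift_del_gam HCA); last by bil.
under_tlift 1%nat ltac:(rewrite (tlift_rho_mu HM); last by bil).
under_tlift 2%nat ltac:(rewrite (tlift_del_gam HCH); last by bil).
apply: eq_tlift => q1 q2; apply: eq_tlift => r1 r2; apply: eq_tlift => s1 s2.
rewrite tlift_tmul; last by bil.
by rewrite !smash_gam_tmul // alphaK (ha_alpha_mul HA) alphaiK (zpow_alpha HB).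
Qed.


Lemma smash_counitl t : tlift (fun u w => Eps w *: u) (Del t) = gami t.
Proof.
have Eps_lin := smash_eps_lin epsH_lin epsA_lin.
move: t; apply: tensor_ext => [||a h].
- by apply: (lin_comp _ smash_del_lin); apply: tlift_linear; bil.
- exact: smash_gam_lin.
rewrite smash_del_tmul smash_del_pureE; last by apply: tlift_linear; bil.
under_tlift 3%nat ltac:(rewrite tlift_tmul; last by bil).
under_tlift 3%nat ltac:(rewrite smash_eps_tmul // (hc_eps_gam HCA) mulrC -scalerA).
under_tlift 2%nat ltac:(rewrite (tlift_del_counitl HCH); last by lin).
under_tlift 1%nat ltac:(rewrite (tlift_rho_eps HCC); last by lin).
rewrite (tlift_del_counitl HCA); last by lin.
by rewrite (zpow_one HB) (ha_unit_l HA) alphaiK smash_gam_tmul.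
Qed.

Lemma smash_counitr t : tlift (fun u w => Eps u *: w) (Del t) = gami t.
Proof.
have Eps_lin := smash_eps_lin epsH_lin epsA_lin.
move: t; apply: tensor_ext => [||a h].
- by apply: (lin_comp _ smash_del_lin); apply: tlift_linear; bil.
- exact: smash_gam_lin.
rewrite smash_del_tmul smash_del_pureE; last by apply: tlift_linear; bil.
under_tlift 3%nat ltac:(rewrite tlift_tmul; last by bil).
under_tlift 3%nat ltac:(rewrite smash_eps_tmul // (hb_eps_mul HB) (eps_zpow HB)
  (hc_eps_gami HCH) mulrA [_ * epsH _]mulrC -scalerA).
under_tlift 2%nat ltac:(rewrite (tlift_del_counitr HCH); last by lin).
under_tlift 2%nat ltac:(rewrite -scalerA).
under_tlift 1%nat ltac:(rewrite tlift_scale (tlift_rho_counit HM); last by lin).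
rewrite (tlift_del_counitr HCA); last by lin.
by rewrite betaiK smash_gam_tmul.
Qed.

Lemma zpow_mul_alphai_assoc x2 x3 x :
  mulH (za x2) (alphai (mulH (za (alphai x3)) (alphai (alphai x))))
  = alphai (mulH (za (mulH x2 (alphai x3))) (alphai x)).
Proof.
rewrite !(alphai_mul HB) (zpow_mul HB) (zpow_alphai HB) (alphai_mul HB).
by rewrite -{1}[za x2]alphaiK (ha_assoc HA) alphaiK.
Qed.

Lemma smash_del_pure_tmul_l a h (y : tensor A H) :
  smash_del_pure a h \ot y =
  tlift (fun q1 q2 => tlift (fun r1 r2 => tlift (fun s1 s2 =>
    ((q1 \ot mulH (za r1) (alphai s1)) \ot (beta r2 \ot s2)) \ot y) (delH h))
    (rho q2)) (delA a).
Proof. by rewrite (smash_del_pureE (phi := fun T => T \ot y)) //; lin. Qed.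

Definition smash_coassoc_nf (a : A) (h : H) :
    tensor (tensor (tensor A H) (tensor A H)) (tensor A H) :=
  tlift (fun a1 a2 => tlift (fun a11 a12 => tlift (fun c1 c2 => tlift (fun d1 d2 =>
  tlift (fun e1 e2 => tlift (fun h1 h2 => tlift (fun h21 h22 =>
    (a11 \ot alphai (mulH (za (mulH c1 (alphai d1))) (alphai h1))) \ot
    (beta c2 \ot mulH (za e1) (alphai h21)) \ot (beta e2 \ot h22))
  (delH h2)) (delH h)) (rho d2)) (rho a2)) (rho a12)) (delA a1)) (delA a).

Lemma smash_coassoc_lhs a h :
  tassoc (tlift (fun u w => gami u \ot Del w) (Del (a \ot h))) = smash_coassoc_nf a h.
Proof.
have gami_Del_bilin : bilin (fun u w : tensor A H => gami u \ot Del w).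
  by have gami_lin := smash_gam_lin alphai_lin betai_lin;
     have Del_lin := smash_del_lin; bil.
rewrite smash_del_tmul.
rewrite (smash_del_pureE (phi := fun T => tassoc (tlift (fun u w => gami u \ot Del w) T)));
  last exact (lin_comp (@tassoc_linear _ _ _ _) (tlift_linear gami_Del_bilin)).
under_tlift 3%nat ltac:(rewrite tlift_tmul //).
under_tlift 3%nat ltac:(rewrite smash_gam_tmul // smash_del_tmul tassoc_tmul).
under_tlift 3%nat ltac:(rewrite (smash_del_pureE (phi := tlift _)); last by lin).
under_tlift 6%nat ltac:(rewrite tlift_tmul; last by bil).
under_tlift 3%nat ltac:(rewrite (tlift_del_gam HCA); last by bil).
under_tlift 4%nat ltac:(rewrite (tlift_rho_mu HM); last by bil).
under_tlift 2%nat ltac:(rewrite exchange_tlift).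
under_tlift 3%nat ltac:(rewrite exchange_tlift).
under_tlift 1%nat ltac:(rewrite (tlift_rho_del HCC); last by tril).
rewrite (tlift_del_coassoc_r HCA); last by tril.
under_tlift 3%nat ltac:(rewrite (tlift_rho_mui HM alphaK alphai_lin); last by bil).
under_tlift 4%nat ltac:(rewrite (tlift_rho_mui HM alphaK alphai_lin); last by bil).
by under_tlift 7%nat ltac:(rewrite betaK alphaiK betaiK).
Qed.

Lemma smash_coassoc_rhs a h :
  tlift (fun u w => Del u \ot gami w) (Del (a \ot h)) = smash_coassoc_nf a h.
Proof.
have Del_gami_bilin : bilin (fun u w : tensor A H => Del u \ot gami w).
  by have gami_lin := smash_gam_lin alphai_lin betai_lin;
     have Del_lin := smash_del_lin; bil.
rewrite smash_del_tmul smash_del_pureE; last exact: tlift_linear.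
under_tlift 3%nat ltac:(rewrite tlift_tmul //).
under_tlift 3%nat ltac:(rewrite smash_del_tmul smash_gam_tmul // betaK smash_del_pure_tmul_l).
under_tlift 5%nat ltac:(rewrite (tlift_del_mul HB); last by bil).
under_tlift 5%nat ltac:(rewrite (tlift_del_zpow HB); last by bil).
under_tlift 6%nat ltac:(rewrite (tlift_del_gami HCH); last by bil).
under_tlift 2%nat ltac:(rewrite exchange_tlift).
under_tlift 3%nat ltac:(rewrite exchange_tlift).
under_tlift 4%nat ltac:(rewrite exchange_tlift).
under_tlift 1%nat ltac:(rewrite exchange_tlift).
under_tlift 2%nat ltac:(rewrite exchange_tlift).
under_tlift 3%nat ltac:(rewrite (tlift_rho_coassoc HM); last by tril).
under_tlift 5%nat ltac:(rewrite (tlift_del_coassoc HCH); last by tril).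
do 7 apply: eq_tlift => ? ?.
by rewrite alphaK zpow_mul_alphai_assoc.
Qed.

Lemma smash_coassoc t :
  tassoc (tlift (fun u w => gami u \ot Del w) (Del t)) =
  tlift (fun u w => Del u \ot gami w) (Del t).
Proof.
have gami_lin := smash_gam_lin alphai_lin betai_lin; have Del_lin := smash_del_lin.
move: t; apply: tensor_ext => [||a h]; last by rewrite smash_coassoc_lhs smash_coassoc_rhs.
  by refine (lin_comp (@tassoc_linear _ _ _ _) _); apply: lin_tlift_arg => //; bil.
by apply: lin_tlift_arg => //; bil.
Qed.

Lemma smash_hom_coalgebra : HomCoalgebraAx gam gami Del Eps.
Proof.
have gamK := smash_gamK alpha_lin beta_lin alphai_lin betai_lin.
split.
- exact: smash_gam_lin.
- exact: gamK.
- exact: smash_gamK.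
- exact: smash_del_lin.
- exact: smash_eps_lin.
- exact: smash_coassoc.
- exact: smash_del_gam.
- exact: smash_counitl.
- exact: smash_counitr.
- exact: smash_eps_gam.
Qed.

End SmashCoproduct.

Theorem proposition3p1 (K : fieldType) (H A : lmodType K)
  (mulH : H -> H -> H) (oneH : H) (alpha alphai : H -> H)
  (delH : H -> tensor H H) (epsH : H -> K)
  (beta betai : A -> A) (delA : A -> tensor A A) (epsA : A -> K)
  (rho : A -> tensor H A) (m : int) :
  HomBialgebraAx mulH oneH alpha alphai delH epsH ->
  HomComoduleCoalgebraAx mulH oneH alpha alphai delH epsH
    beta betai delA epsA rho ->
  is_hom_coalgebra (smash_gam alpha beta)
    (smash_del mulH alpha alphai delH beta delA rho m)
    (smash_eps epsH epsA).
Proof.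
move=> HB HCC; exists (smash_gam alphai betai).
exact: (smash_hom_coalgebra m HB HCC).
Qed.
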